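(* For every tree $T$ with at least one edge, $sr(T)=\lceil \Delta(T)/2\rceil$, where $\Delta(T)$ is the maximum degree of $T$.
   Context: All graphs are finite, simple and undirected. For a set $E'$ of edges of a graph, the subgraph induced by $E'$ is the graph whose edge set is $E'$ and whose vertex set is the set of endpoints of edges in $E'$. A graph is semiregular (a $[d,d+1]$-graph) if there is an integer $d$ such that every vertex has degree $d$ or $d+1$. The semiregular number $sr(G)$ of a graph $G$ is the minimum number of subsets into which $E(G)$ can be partitioned so that the subgraph induced by each subset is semiregular. *)

From mathcomp Require Import all_boot.
Set Implicit Arguments. Unset Strict Implicit. Unset Printing Implicit Defensive.

Section Graphs.
Variable V : finType.

Definition simple_graph (e : rel V) : Prop := symmetric e /\ irreflexive e.

Definition edges (e : rel V) : {set {set V}} :=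
  [set [set x; y] | x in V, y in V & e x y].

Definition deg (e : rel V) (v : V) : nat := #|[set w | e v w]|.

Definition maxdeg (e : rel V) : nat := \max_(v : V) deg e v.

Definition connected (e : rel V) : Prop := forall x y : V, connect e x y.

(* a cycle: distinct vertices x :: p, at least 3 of them, consecutive ones
   adjacent, and the last adjacent to the first *)
Definition acyclic (e : rel V) : Prop :=
  forall (x : V) (p : seq V),
    ~ [&& path e x p, uniq (x :: p), 2 <= size p & e (last x p) x].

Definition tree (e : rel V) : Prop := simple_graph e /\ connected e /\ acyclic e.

Definition edeg (F : {set {set V}}) (v : V) : nat := #|[set E in F | v \in E]|.

(* the subgraph induced by F (vertex set = endpoints of edges of F) is
   semiregular: some d with every vertex of it of degree d or d+1 *)
Definition semiregular_edges (F : {set {set V}}) : Prop :=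
  exists d : nat, forall v : V, 0 < edeg F v -> edeg F v = d \/ edeg F v = d.+1.

(* E(G) can be partitioned into (at most) k classes, each inducing a
   semiregular subgraph; classes are the fibres of a labelling c *)
Definition sr_partition (e : rel V) (k : nat) : Prop :=
  exists c : {set V} -> 'I_k,
    forall i : 'I_k, semiregular_edges [set E in edges e | c E == i].

Definition is_sr (e : rel V) (s : nat) : Prop :=
  sr_partition e s /\ forall k, sr_partition e k -> s <= k.

End Graphs.

From mathcomp Require Import all_boot.
Set Implicit Arguments. Unset Strict Implicit. Unset Printing Implicit Defensive.

(* A semiregular class of edges of a forest spans a nonempty forest, which has
   a leaf; so the class is a [d, d+1]-graph with d <= 1 and all its degrees are
   at most 2.  Since the degree of a vertex is the sum of its degrees in the
   classes, k classes force Delta <= 2k.  Conversely, with k = ceil(Delta/2)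
   colours, delete a leaf edge uw, colour the rest inductively so that every
   colour class has maximum degree at most 2, and give uw a colour used at most
   once at w: it exists because w has fewer than 2k remaining edges.  Classes
   of maximum degree at most 2 are [1,2]-graphs. *)

Section SemiregularForests.
Variable V : finType.
Implicit Types (e f g : rel V) (F : {set {set V}}).

Lemma eq_set2 (a b x y : V) :
  [set x; y] = [set a; b] -> (x = a /\ y = b) \/ (x = b /\ y = a).
Proof.
move=> Exy.
have := set21 x y; have := set22 x y; have := set21 a b; have := set22 a b.
rewrite -{1 2}Exy {3 4}Exy !inE.
by do 4!case/orP=> /eqP ?; subst; auto.
Qed.

Lemma edgesP f E : reflect (exists x y, f x y /\ E = [set x; y]) (E \in edges f).
Proof.
apply: (iffP imset2P) => [[x y _]|[x [y [fxy ->]]]].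
  by rewrite inE => fxy ->; exists x, y.
by exists x y; rewrite ?inE.
Qed.

Lemma edges_pair f E : irreflexive f -> E \in edges f ->
  exists a b, a != b /\ E = [set a; b].
Proof.
move=> firr /edgesP[x [y [fxy ->]]]; exists x, y; split=> //.
by apply: contraTneq fxy => ->; rewrite firr.
Qed.

Lemma edges_subrel f g : subrel f g -> edges f \subset edges g.
Proof.
by move=> fg; apply/subsetP=> E /edgesP[x [y [/fg gxy ->]]]; apply/edgesP; exists x, y.
Qed.

Definition graph_of F : rel V := fun x y => (x != y) && ([set x; y] \in F).

Lemma graph_of_sym F : symmetric (graph_of F).
Proof. by move=> x y; rewrite /graph_of eq_sym setUC. Qed.

Lemma graph_of_irr F : irreflexive (graph_of F).
Proof. by move=> x; rewrite /graph_of eqxx. Qed.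

Lemma graph_of_edges e : simple_graph e -> graph_of (edges e) =2 e.
Proof.
case=> esym eirr x y; rewrite /graph_of; apply/andP/idP=> [[_]|exy].
  by case/edgesP=> a [b [eab /eq_set2[][-> ->]]]; rewrite // esym.
split; last by apply/edgesP; exists x, y.
by apply: contraTneq exy => ->; rewrite eirr.
Qed.

Lemma edeg_graph_of e F v : irreflexive e -> F \subset edges e ->
  edeg F v = deg (graph_of F) v.
Proof.
move=> eirr sFe; rewrite /edeg /deg.
have -> : [set E in F | v \in E] = (fun w => [set v; w]) @: [set w | graph_of F v w].
  apply/setP=> E; rewrite inE; apply/andP/imsetP=> [[EF]|[w]].
    have [a [b [ab Eab]]] := edges_pair eirr (subsetP sFe E EF).
    rewrite Eab in EF *; case/set2P=> ->.
      by exists b; rewrite // inE /graph_of ab.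
    by exists a; rewrite 1?setUC // inE /graph_of eq_sym ab setUC.
  by rewrite inE => /andP[_ EF] ->; rewrite set21.
rewrite card_in_imset // => w1 w2; rewrite !inE => /andP[vw1 _] _.
by case/eq_set2=> [[_ //]|[_ w1v]]; rewrite w1v eqxx in vw1.
Qed.

Lemma deg_edeg e v : simple_graph e -> deg e v = edeg (edges e) v.
Proof.
move=> es; rewrite (edeg_graph_of v (proj2 es) (subxx _)).
by apply: eq_card=> w; rewrite !inE graph_of_edges.
Qed.

Lemma edegS F1 F2 v : F1 \subset F2 -> edeg F1 v <= edeg F2 v.
Proof.
move=> sF12; apply: subset_leq_card; apply/subsetP=> E.
by rewrite !inE => /andP[/(subsetP sF12) -> ->].
Qed.

Lemma edegU F1 F2 v : edeg (F1 :|: F2) v <= edeg F1 v + edeg F2 v.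
Proof.
rewrite /edeg; set A1 := [set E in F1 | v \in E]; set A2 := [set E in F2 | v \in E].
apply: leq_trans (leq_card_setU A1 A2); apply: subset_leq_card; apply/subsetP=> E.
by rewrite !inE => /andP[/orP[] -> ->]; rewrite ?orbT.
Qed.

Lemma edeg_set1 (E : {set V}) v : edeg [set E] v = (v \in E).
Proof.
rewrite /edeg (_ : [set _ in _ | _] = if v \in E then [set E] else set0).
  by case: ifP; rewrite ?cards1 ?cards0.
by apply/setP=> E'; rewrite !inE; case: ifP; rewrite ?inE; case: eqP => // ->.
Qed.

Lemma edeg_set0 v : edeg (set0 : {set {set V}}) v = 0.
Proof. by apply/eqP; rewrite cards_eq0; apply/eqP/setP=> E; rewrite !inE. Qed.

Definition color_class f k (c : {set V} -> 'I_k) (i : 'I_k) : {set {set V}} :=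
  [set E in edges f | c E == i].

Lemma color_class_sub f k (c : {set V} -> 'I_k) i : color_class f c i \subset edges f.
Proof. by apply/subsetP=> E; rewrite inE => /andP[]. Qed.

Lemma deg_sum_color_class e k (c : {set V} -> 'I_k) v : simple_graph e ->
  deg e v = \sum_(i < k) edeg (color_class e c i) v.
Proof.
move=> es; rewrite deg_edeg // /edeg -sum1_card (partition_big c xpredT) //=.
by apply: eq_bigr=> i _; rewrite -sum1_card; apply: eq_bigl=> E; rewrite !inE andbAC.
Qed.

Lemma exists_sparse_color_class e k (c : {set V} -> 'I_k) v : simple_graph e ->
  deg e v < k.*2 -> exists j, edeg (color_class e c j) v <= 1.
Proof.
move=> es dv; apply/existsP; apply: contraTT dv; rewrite negb_exists -leqNgt.
move=> /forallP dense; rewrite (deg_sum_color_class c v es).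
have -> : k.*2 = \sum_(i < k) 2 by rewrite sum_nat_const card_ord muln2.
by apply: leq_sum=> i _; rewrite ltnNge dense.
Qed.

Lemma sub_acyclic f g : subrel f g -> acyclic g -> acyclic f.
Proof.
move=> fg gac x p /and4P[fp up sp fpx]; apply: (gac x p).
by rewrite (sub_path fg fp) up sp fg.
Qed.

Section Leaf.
Variable f : rel V.
Hypotheses (fsym : symmetric f) (firr : irreflexive f) (fac : acyclic f).

Lemma acyclic_chord z y q w : path f z (y :: q) -> uniq (z :: y :: q) ->
  w \in q -> ~~ f z w.
Proof.
move=> + + wq; case/splitPr: wq => q1 q2; rewrite -cat_rcons -!cat_cons.
rewrite cat_path cat_uniq => /andP[fp _] /andP[up _]; apply/negP=> fzw.
apply: (@fac z (y :: rcons q1 w)).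
by rewrite fp up /= size_rcons last_rcons fsym fzw.
Qed.

(* A path that cannot be extended ends at a leaf; [n] bounds how often the
   path can still be extended. *)
Lemma uniq_path_leaf n z y q : #|V| < n + size q ->
  path f z (y :: q) -> uniq (z :: y :: q) -> exists u, deg f u = 1.
Proof.
elim: n z y q => [|n IHn] z y q.
  rewrite add0n => Vq _ /card_uniqP card_zyq.
  have := leq_ltn_trans (max_card (mem (z :: y :: q))) Vq.
  by rewrite card_zyq => /ltnW/ltnW; rewrite ltnn.
move=> Vq fp up; have [zleaf|znonleaf] := eqVneq (deg f z) 1; first by exists z.
have fzy : f z y by case/andP: fp.
have [w] : exists2 w, f z w & w != y.
  apply/exists_inP; apply: contraNT znonleaf; rewrite negb_exists_in.
  move=> /forall_inP noother; rewrite /deg.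
  suff -> : [set w | f z w] = [set y] by rewrite cards1.
  by apply/setP=> w; rewrite !inE; apply/idP/eqP=> [/noother/negbNE/eqP|->].
move=> fzw wy; apply: (IHn w z (y :: q)).
- by rewrite /= addnS -addSn.
- by apply/andP; rewrite fsym.
have wz : w != z by apply: contraTneq fzw => ->; rewrite firr.
have wq : w \notin q by apply: contraTN fzw; exact: acyclic_chord fp up.
by rewrite cons_uniq up andbT !inE (negbTE wz) (negbTE wy) (negbTE wq).
Qed.

Lemma acyclic_leaf x y : f x y -> exists u, deg f u = 1.
Proof.
move=> fxy; apply: (@uniq_path_leaf #|V|.+1 x y [::]).
- by rewrite addn0.
- by rewrite /= fxy.
by rewrite /= inE andbT; apply: contraTneq fxy => ->; rewrite firr.
Qed.

End Leaf.

Lemma semiregular_forest_edeg e F v : simple_graph e -> acyclic e ->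
  F \subset edges e -> semiregular_edges F -> edeg F v <= 2.
Proof.
move=> es eac sFe [d Fd]; have [-> //|vpos] := posnP (edeg F v).
have [E] : exists E, E \in [set E in F | v \in E].
  by apply/set0Pn; rewrite -card_gt0.
rewrite inE => /andP[EF _].
have [a [b [ab Eab]]] := edges_pair (proj2 es) (subsetP sFe E EF).
have Fab : graph_of F a b by rewrite /graph_of ab -Eab.
have Fe : subrel (graph_of F) e.
  move=> x y /andP[xy Fxy]; rewrite -(graph_of_edges es) /graph_of xy.
  exact: subsetP sFe _ Fxy.
have [u Fu] := acyclic_leaf (graph_of_sym F) (graph_of_irr F) (sub_acyclic Fe eac) Fab.
rewrite -(edeg_graph_of u (proj2 es) sFe) in Fu.
have d_le1 : d <= 1 by have := Fd u; rewrite Fu => /(_ isT) [<-|[<-]].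
by case: (Fd v vpos) => ->; rewrite ?ltnS // (leq_trans d_le1).
Qed.

Lemma edeg_le2_semiregular F : (forall v, edeg F v <= 2) -> semiregular_edges F.
Proof. by move=> F2; exists 1 => v; have := F2 v; case: edeg => [|[|[|]]]; auto. Qed.

Definition del_edge f (a b : V) : rel V :=
  fun x y => f x y && ([set x; y] != [set a; b]).

Lemma del_edge_sub f a b : subrel (del_edge f a b) f.
Proof. by move=> x y /andP[]. Qed.

Lemma simple_graph_del_edge f a b : simple_graph f -> simple_graph (del_edge f a b).
Proof.
case=> fsym firr; split=> [x y|x]; last by rewrite /del_edge firr.
by rewrite /del_edge fsym setUC.
Qed.

Lemma deg_subrel f g v : subrel f g -> deg f v <= deg g v.
Proof. by move=> fg; apply: subset_leq_card; apply/subsetP=> w; rewrite !inE => /fg. Qed.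

Lemma edges_del_edge f a b : f a b -> edges (del_edge f a b) \proper edges f.
Proof.
move=> fab; rewrite properE (edges_subrel (@del_edge_sub f a b)) /=.
apply/subsetPn; exists [set a; b]; first by apply/edgesP; exists a, b.
by apply/edgesP=> -[x [y [/andP[_ xy_ab] Exy]]]; rewrite Exy eqxx in xy_ab.
Qed.

Lemma deg_del_edge f a b : symmetric f -> f a b -> deg (del_edge f a b) b < deg f b.
Proof.
move=> fsym fab; apply: proper_card; rewrite properE.
apply/andP; split; first by apply/subsetP=> z; rewrite !inE => /andP[].
apply/subsetPn; exists a; first by rewrite inE fsym.
by rewrite inE /del_edge setUC eqxx andbF.
Qed.

Lemma color_class_del_edge f a b k (c : {set V} -> 'I_k) j i :
  color_class f [eta c with [set a; b] |-> j] i \subset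
  color_class (del_edge f a b) c i :|: (if i == j then [set [set a; b]] else set0).
Proof.
apply/subsetP=> E; rewrite !inE /=.
have [-> /andP[_ /eqP <-]|Eab] := eqVneq E [set a; b]; first by rewrite eqxx set11 orbT.
case/andP=> /edgesP[x [y [fxy Exy]]] ->; rewrite andbT; apply/orP; left.
by apply/edgesP; exists x, y; rewrite /del_edge fxy -Exy Eab.
Qed.

Lemma recolor_edeg_le2 f u w k (c : {set V} -> 'I_k) j :
  simple_graph f -> deg f u <= 2 ->
  (forall i v, edeg (color_class (del_edge f u w) c i) v <= 2) ->
  edeg (color_class (del_edge f u w) c j) w <= 1 ->
  forall i v, edeg (color_class f [eta c with [set u; w] |-> j] i) v <= 2.
Proof.
move=> fs fu c2 cj i v; have [->|vu] := eqVneq v u.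
  by rewrite (leq_trans (edegS _ (color_class_sub _ _ _))) // -deg_edeg.
apply: leq_trans (edegS _ (color_class_del_edge _ _ _ _ _ _)) _.
apply: leq_trans (edegU _ _ _) _.
case: eqP => [->|_]; last by rewrite edeg_set0 addn0.
rewrite edeg_set1 !inE (negbTE vu) /=.
by have [->|_] := eqVneq v w; rewrite ?addn1 ?addn0.
Qed.

Lemma forest_coloring f k : 0 < k -> simple_graph f -> acyclic f ->
  (forall v, deg f v <= k.*2) ->
  exists c : {set V} -> 'I_k, forall i v, edeg (color_class f c i) v <= 2.
Proof.
move=> kpos; elim: {f}#|edges f|.+1 {-2}f (ltnSn #|edges f|) => // n IHn f fn fs fac fdeg.
have [f0|[E /edgesP[x [y [fxy _]]]]] := set_0Vmem (edges f).
  exists (fun=> Ordinal kpos) => i v.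
  by rewrite (leq_trans (edegS _ (color_class_sub _ _ _))) // f0 edeg_set0.
have [u fu1] := acyclic_leaf fs.1 fs.2 fac fxy.
have [w Nu] : exists w, [set z | f u z] = [set w] by apply/cards1P/eqP.
have fuw : f u w by have := set11 w; rewrite -Nu inE.
have f's := simple_graph_del_edge u w fs.
have [c' c'2] : exists c' : {set V} -> 'I_k,
    forall i v, edeg (color_class (del_edge f u w) c' i) v <= 2.
  apply: IHn f's (sub_acyclic (@del_edge_sub f u w) fac) _.
    exact: leq_trans (proper_card (edges_del_edge fuw)) fn.
  by move=> v; apply: leq_trans (fdeg v); apply: deg_subrel; apply: del_edge_sub.
have [j cj] := exists_sparse_color_class c' f's
  (leq_trans (deg_del_edge fs.1 fuw) (fdeg w)).
by exists [eta c' with [set u; w] |-> j]; apply: recolor_edeg_le2; rewrite ?fu1.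
Qed.

Lemma forest_sr_partition e k : simple_graph e -> acyclic e -> 0 < k ->
  maxdeg e <= k.*2 -> sr_partition e k.
Proof.
move=> es eac kpos /bigmax_leqP Delta_le.
have [c c2] := forest_coloring kpos es eac (fun v => Delta_le v isT).
by exists c => i; apply: edeg_le2_semiregular => v; apply: c2.
Qed.

Lemma sr_partition_maxdeg e k : simple_graph e -> acyclic e ->
  sr_partition e k -> maxdeg e <= k.*2.
Proof.
move=> es eac [c csr]; apply/bigmax_leqP=> v _.
have -> : k.*2 = \sum_(i < k) 2 by rewrite sum_nat_const card_ord muln2.
rewrite (deg_sum_color_class c v es); apply: leq_sum=> i _.
exact: semiregular_forest_edeg (color_class_sub _ _ _) (csr i).
Qed.

End SemiregularForests.

Theorem theorem3 (V : finType) (e : rel V) :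
  tree e -> (exists x y : V, e x y) ->
  is_sr e (uphalf (maxdeg e)).
Proof.
move=> [es [_ eac]] [x [y exy]]; split=> [|k /(sr_partition_maxdeg es eac)].
  apply: forest_sr_partition; rewrite -?leq_uphalf_double // uphalf_gt0.
  apply: leq_trans (leq_bigmax x); rewrite /deg card_gt0.
  by apply/set0Pn; exists y; rewrite inE.
by rewrite leq_uphalf_double.
Qed.
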